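(* Let $S\ge0$ be an integer and let $\mathbf a=(a_1,\dots,a_m)$ be a partition. Then there exists a partition $\mathbf g=(g_1,\dots,g_{m+1})$ such that $\sum_{i=1}^{m+1}g_i=S$ and $\mathbf g\prec'\mathbf a$.
   Context: A partition is a nonincreasing finite sequence of nonnegative integers. 1-step generalized majorization: for nonincreasing integer sequences $\mathbf g=(g_1,\dots,g_{m+1})$ and $\mathbf a=(a_1,\dots,a_m)$, set $a_{m+1}=-\infty$ and $h=\min\{i: a_i<g_i\}$; then $\mathbf g\prec'\mathbf a$ means $a_i=g_{i+1}$ for all $h\le i\le m$. *)

From mathcomp Require Import all_boot.
Set Implicit Arguments. Unset Strict Implicit. Unset Printing Implicit Defensive.

Definition is_partition (s : seq nat) : Prop := sorted geq s.

(* Indices are 0-based: a = (a_0,...,a_{m-1}), g = (g_0,...,g_m).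
   The extended a_m = -oo, so "a_i < g_i" holds automatically for i >= m.
   first_exceed g a = min { i <= m : a_i < g_i } (0-based h). *)
Definition first_exceed (g a : seq nat) : nat :=
  find (fun i => (size a <= i) || (nth 0 a i < nth 0 g i)) (iota 0 (size a).+1).

(* 1-step generalized majorization  g <' a  (g of length m+1, a of length m):
   a_i = g_{i+1} for all h <= i <= m  (1-based), i.e. for h <= i < m (0-based). *)
Definition gen_maj1 (g a : seq nat) : Prop :=
  size g = (size a).+1 /\
  forall i, first_exceed g a <= i < size a -> nth 0 a i = nth 0 g i.+1.

From mathcomp Require Import all_boot.
From mathcomp Require Import zify.

(* Build g from the left: copy a_i, capped by the mass r still to be placed,
   until the leftover r - (a_i + ... + a_{m-1}) is at least a_i; then put the
   leftover in position i and copy a_i, ..., a_{m-1} one slot to the right.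
   Every entry before the insertion point is at most the corresponding a_i,
   so the index h of the definition of g <' a is at or after that point, and
   from there on g is a shifted by one. *)

Fixpoint greedy_fill (s : nat) (a : seq nat) : seq nat :=
  match a with
  | [::] => [:: s]
  | y :: a' =>
      if y + sumn a <= s then (s - sumn a) :: a
      else minn y s :: greedy_fill (s - minn y s) a'
  end.

Lemma size_greedy_fill s a : size (greedy_fill s a) = (size a).+1.
Proof.
elim: a s => //= y a IHa s.
by case: ifP => _ //=; rewrite IHa.
Qed.

Lemma sumn_greedy_fill s a : sumn (greedy_fill s a) = s.
Proof.
elim: a s => [|y a IHa] s /=; first by rewrite addn0.
case: ifP => [fits | _] /=; last by rewrite IHa; lia.
by move: fits => /=; lia.
Qed.

Lemma head_greedy_fill s a :
  head 0 (greedy_fill s a) <= minn s (maxn (head 0 a) (s - sumn a)).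
Proof.
have head_le_sumn (g : seq nat) : head 0 g <= sumn g.
  by case: g => //= x g; exact: leq_addr.
rewrite leq_min -[X in _ <= X](sumn_greedy_fill s a) head_le_sumn /=.
by case: a => [|y a] /=; [lia | case: ifP => /=; lia].
Qed.

Lemma sorted_greedy_fill s a : sorted geq a -> sorted geq (greedy_fill s a).
Proof.
elim: a s => //= y a IHa s path_ya.
have head_a : head 0 a <= y by move: path_ya; case: (a) => //= x ? /andP[].
have sorted_a : sorted geq a := path_sorted path_ya.
case: ifP => [fits | overflows]; first by rewrite /= path_ya andbT; lia.
have := head_greedy_fill (s - minn y s) a.
have := IHa (s - minn y s) sorted_a.
have := size_greedy_fill (s - minn y s) a.
case: (greedy_fill _ _) => //= x g _ -> head_x; rewrite andbT.
by move: overflows head_x => /negbT; lia.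
Qed.

Lemma first_exceed_cons z y g a :
  z <= y -> first_exceed (z :: g) (y :: a) = (first_exceed g a).+1.
Proof.
move=> le_zy; rewrite /first_exceed.
have -> : iota 0 (size (y :: a)).+1 = 0 :: [seq i.+1 | i <- iota 0 (size a).+1].
  by rewrite -(iotaDl 1).
by rewrite /= ltnNge le_zy find_map.
Qed.

Lemma gen_maj1_cons z y g a :
  z <= y -> gen_maj1 g a -> gen_maj1 (z :: g) (y :: a).
Proof.
move=> le_zy [size_g shifted]; split; first by rewrite /= size_g.
rewrite first_exceed_cons //; case=> [|i] //= /andP[h_le_i i_lt].
by apply: shifted; rewrite -ltnS h_le_i.
Qed.

Lemma gen_maj1_greedy_fill s a : gen_maj1 (greedy_fill s a) a.
Proof.
elim: a s => //= y a IHa s.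
by case: ifP => _ //; exact/gen_maj1_cons/IHa/geq_minl.
Qed.

Theorem lemma5p1 (s : nat) (a : seq nat) :
  is_partition a ->
  exists g : seq nat,
    is_partition g /\ size g = (size a).+1 /\ sumn g = s /\ gen_maj1 g a.
Proof.
move=> part_a; exists (greedy_fill s a).
split; first exact: sorted_greedy_fill.
split; first exact: size_greedy_fill.
by split; [exact: sumn_greedy_fill | exact: gen_maj1_greedy_fill].
Qed.
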